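(* Let $K$ be a field, $n,\ell\ge1$, $B=\{u_1,\dots,u_\ell\}\subseteq K^n$ with $u_i\ne u_j$ for $i\ne j$, and $\alpha\in K^\ell$. Regard $K[z]=K[z_1,\dots,z_n]$ as a module over itself. Then \[ \sigma(N_{B,\alpha})=\{f\in K[z]: |S_{\alpha_{f,B}}|\le1\},\qquad \tau(N_{B,\alpha})=\{f\in K[z]: \alpha_{f,B}\in\Omega_\ell\}. \]
   Context: For $\beta=(\beta_1,\dots,\beta_\ell)\in K^\ell$, $S_\beta=\{i:\beta_i\ne0\}$, and $\Omega_\ell$ is the set of $\beta\in K^\ell$ such that $\sum_{i\in C}\beta_i\ne0$ for every nonempty $C\subseteq S_\beta$ (so $0\in\Omega_\ell$). For $f\in K[z]$, $\alpha_{f,B}=(\alpha_1f(u_1),\dots,\alpha_\ell f(u_\ell))$. $N_{B,\alpha}=\{f\in K[z]: \sum_{i=1}^\ell\alpha_if(u_i)=0\}$. For a $K$-subspace $N$ of $K[z]$ and $g\in K[z]$, $(N:g)=\{h\in K[z]: hg\in N\}$. A $K$-subspace $J$ of $K[z]$ is a Mathieu subspace if whenever $a^m\in J$ for all $m\ge1$, then for every $b\in K[z]$ we have $ba^m\in J$ for all sufficiently large $m$. $\sigma(N)$ is the set of $g\in K[z]$ with $(N:g)$ an ideal, and $\tau(N)$ the set of $g$ with $(N:g)$ a Mathieu subspace of $K[z]$ (for the commutative algebra $K[z]$ all choices left/right/pre-two-sided/two-sided coincide). *)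

From HB Require Import structures.
From mathcomp Require Import all_boot all_order all_algebra.
Set Implicit Arguments. Unset Strict Implicit. Unset Printing Implicit Defensive.
Import Order.TTheory GRing.Theory Num.Theory.
Local Open Scope ring_scope.

(* K[z_1,...,z_n], realised as the iterated polynomial ring
   K[z_1,...,z_{n-1}][z_n]; the outermost variable is z_n. *)
Fixpoint mpoly (K : fieldType) (n : nat) : comNzRingType :=
  match n with
  | 0 => K
  | n'.+1 => {poly mpoly K n'}
  end.

Fixpoint mconst (K : fieldType) (n : nat) : K -> mpoly K n :=
  match n return K -> mpoly K n with
  | 0 => fun c => c
  | n'.+1 => fun c => (@mconst K n' c)%:P
  end.

Fixpoint meval (K : fieldType) (n : nat) : mpoly K n -> ('I_n -> K) -> K :=
  match n return mpoly K n -> ('I_n -> K) -> K with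
  | 0 => fun p _ => p
  | n'.+1 => fun p u =>
      meval (p.[@mconst K n' (u ord_max)])
            (fun i : 'I_n' => u (widen_ord (leqnSn n') i))
  end.

Definition is_Ksubspace (K : fieldType) (n : nat) (J : mpoly K n -> Prop) :=
  [/\ J 0,
      (forall x y, J x -> J y -> J (x + y)) &
      (forall (c : K) x, J x -> J (@mconst K n c * x))].

Definition is_ideal (K : fieldType) (n : nat) (J : mpoly K n -> Prop) :=
  [/\ J 0,
      (forall x y, J x -> J y -> J (x + y)) &
      (forall r x, J x -> J (r * x))].

Definition is_Mathieu (K : fieldType) (n : nat) (J : mpoly K n -> Prop) :=
  is_Ksubspace J /\
  forall a : mpoly K n, (forall m : nat, (1 <= m)%N -> J (a ^+ m)) ->
    forall b : mpoly K n, exists M : nat, forall m : nat, (M <= m)%N -> J (b * a ^+ m).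

Definition colon (K : fieldType) (n : nat) (N : mpoly K n -> Prop) (g : mpoly K n)
  : mpoly K n -> Prop := fun h => N (h * g).

Definition sigma_set (K : fieldType) (n : nat) (N : mpoly K n -> Prop) : mpoly K n -> Prop :=
  fun g => is_ideal (colon N g).

Definition tau_set (K : fieldType) (n : nat) (N : mpoly K n -> Prop) : mpoly K n -> Prop :=
  fun g => is_Mathieu (colon N g).

(* N_{B,alpha}, with B = {u_1..u_l} given by u : 'I_l -> K^n *)
Definition N_Balpha (K : fieldType) (n l : nat) (u : 'I_l -> 'I_n -> K) (alpha : 'I_l -> K)
  : mpoly K n -> Prop :=
  fun f => \sum_(i < l) alpha i * meval f (u i) = 0.

Definition alpha_fB (K : fieldType) (n l : nat) (u : 'I_l -> 'I_n -> K) (alpha : 'I_l -> K)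
  (f : mpoly K n) : 'I_l -> K := fun i => alpha i * meval f (u i).

Definition supp (K : fieldType) (l : nat) (beta : 'I_l -> K) : {set 'I_l} :=
  [set i | beta i != 0].

Definition Omega (K : fieldType) (l : nat) (beta : 'I_l -> K) : Prop :=
  forall C : {set 'I_l}, C != set0 -> C \subset supp beta -> \sum_(i in C) beta i != 0.

From HB Require Import structures.
From mathcomp Require Import all_boot all_order all_algebra.
From Stdlib Require Import FunctionalExtensionality.
Set Implicit Arguments. Unset Strict Implicit. Unset Printing Implicit Defensive.
Import Order.TTheory GRing.Theory Num.Theory.
Local Open Scope ring_scope.

(** The colon subspace (N_{B,alpha} : g) is again of the form N_{B,beta}, with
    beta = alpha_{g,B}, and polynomials can take arbitrary values on the finite
    set B.  So everything reduces to properties of the weight vector beta.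
    If two weights beta_i, beta_j are nonzero, a polynomial vanishing off
    {u_i, u_j} with values (beta_j, -beta_i) lies in N_{B,beta}, but its
    product with the indicator of u_i does not.  For the Mathieu property,
    a^m in N_{B,beta} for all m >= 1 says that the power sums
    sum_j beta_j a(u_j)^m vanish; evaluating a polynomial without constant
    term that kills all values a(u_j) except one value c <> 0 shows that the
    weights of the level set {a(u_j) = c} sum to 0, which Omega forbids.
    Hence a vanishes on the support of beta and b a^m lies in N_{B,beta}. *)

Section Evaluation.
Variable K : fieldType.
Implicit Types (n : nat).

Lemma mevalD n (p q : mpoly K n) u : meval (p + q) u = meval p u + meval q u.
Proof. by elim: n p q u => [//|n IH] p q u /=; rewrite hornerD IH. Qed.

Lemma mevalM n (p q : mpoly K n) u : meval (p * q) u = meval p u * meval q u.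
Proof. by elim: n p q u => [//|n IH] p q u /=; rewrite hornerM IH. Qed.

Lemma mevalC n (c : K) u : meval (mconst n c) u = c.
Proof. by elim: n u => [//|n IH] u /=; rewrite hornerC IH. Qed.

Lemma meval0 n u : meval (0 : mpoly K n) u = 0.
Proof. by elim: n u => [//|n IH] u /=; rewrite hornerC IH. Qed.

Lemma meval1 n u : meval (1 : mpoly K n) u = 1.
Proof. by elim: n u => [//|n IH] u /=; rewrite hornerC IH. Qed.

Lemma mevalB n (p q : mpoly K n) u : meval (p - q) u = meval p u - meval q u.
Proof. by elim: n p q u => [//|n IH] p q u /=; rewrite hornerD hornerN IH. Qed.

Lemma mevalX n (p : mpoly K n) u m : meval (p ^+ m) u = meval p u ^+ m.
Proof. by elim: m => [|m IH]; rewrite ?meval1 // !exprS mevalM IH. Qed.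

Lemma meval_sum n (I : finType) (F : I -> mpoly K n) u :
  meval (\sum_i F i) u = \sum_i meval (F i) u.
Proof. by apply: (big_morph (fun p => meval p u)) => [p q|]; rewrite ?mevalD ?meval0. Qed.

Lemma meval_prod n (I : finType) (F : I -> mpoly K n) u :
  meval (\prod_i F i) u = \prod_i meval (F i) u.
Proof. by apply: (big_morph (fun p => meval p u)) => [p q|]; rewrite ?mevalM ?meval1. Qed.

Lemma meval_separates_coord n (u v : 'I_n -> K) k :
  u k != v k -> exists p : mpoly K n, meval p u != meval p v.
Proof.
elim: n u v k => [|n IH] u v k; first by case: k.
move=> neq_k; have [eq_last|neq_last] := eqVneq (u ord_max) (v ord_max); last first.
  by exists ('X : {poly mpoly K n}) => /=; rewrite !hornerX !mevalC.
have [k_lt_n|k_ge_n] := ltnP k n; last first.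
  have k_max : k = ord_max by apply: val_inj; apply/eqP; rewrite eqn_leq k_ge_n -ltnS ltn_ord.
  by rewrite k_max eq_last eqxx in neq_k.
have wk : widen_ord (leqnSn n) (Ordinal k_lt_n) = k by apply: val_inj.
have [p neq_p] := IH (fun i => u (widen_ord (leqnSn n) i))
  (fun i => v (widen_ord (leqnSn n) i)) (Ordinal k_lt_n) ltac:(by rewrite /= wk).
by exists (p%:P : {poly mpoly K n}) => /=; rewrite !hornerC.
Qed.

Lemma meval_separates n (u v : 'I_n -> K) :
  u <> v -> exists p : mpoly K n, meval p u = 1 /\ meval p v = 0.
Proof.
move=> neq_uv; have [p neq_p] : exists p : mpoly K n, meval p u != meval p v.
  case: (pickP (fun k => u k != v k)) => [k|eq_uv]; first exact: meval_separates_coord.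
  by case: neq_uv; apply: functional_extensionality => k; apply/eqP/negbFE/eq_uv.
set d := meval p u - meval p v; have d_neq0 : d != 0 by rewrite subr_eq0.
exists (mconst n d^-1 * (p - mconst n (meval p v))).
by rewrite !mevalM !mevalB !mevalC subrr mulr0 mulVf.
Qed.

End Evaluation.

Lemma sum_mul_delta (R : pzSemiRingType) (I : finType) (F : I -> R) i :
  \sum_k F k * (k == i)%:R = F i.
Proof. by rewrite (bigD1 i) //= eqxx mulr1 big1 ?addr0 // => k /negbTE ->; rewrite mulr0. Qed.

Section PowerSums.
Variables (K : fieldType) (l : nat) (beta A : 'I_l -> K).
Hypothesis power_sums_eq0 : forall m, (0 < m)%N -> \sum_j beta j * A j ^+ m = 0.

Lemma power_sums_horner_eq0 (q : {poly K}) : q`_0 = 0 -> \sum_j beta j * q.[A j] = 0.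
Proof.
move=> q0; under eq_bigr do rewrite horner_coef mulr_sumr.
rewrite exchange_big big1 //= => i _; have [i_eq0|i_gt0] := posnP i.
  by rewrite big1 // => j _; rewrite i_eq0 q0 mul0r mulr0.
transitivity (q`_i * \sum_j beta j * A j ^+ i); last by rewrite power_sums_eq0 ?mulr0.
by rewrite mulr_sumr; apply: eq_bigr => j _; rewrite mulrCA.
Qed.

Lemma level_set_weights_eq0 c : c != 0 -> \sum_(j | A j == c) beta j = 0.
Proof.
move=> c_neq0.
pose q : {poly K} := 'X * \prod_(j | A j != c) ('X - (A j)%:P).
have qE x : q.[x] = x * \prod_(j | A j != c) (x - A j).
  rewrite hornerM hornerX horner_prod; congr (_ * _).
  by apply: eq_bigr => j _; rewrite hornerXsubC.
have qc_neq0 : q.[c] != 0.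
  by rewrite qE mulf_neq0 //; apply/prodf_neq0 => j; rewrite subr_eq0 eq_sym.
have qA j : q.[A j] = (A j == c)%:R * q.[c].
  have [->|neq_jc] := eqVneq (A j) c; first by rewrite mul1r.
  by rewrite qE (bigD1 j) //= subrr mul0r mulr0 mul0r.
have := power_sums_horner_eq0 (q := q); rewrite coefXM eqxx => /(_ erefl).
under eq_bigr do rewrite qA mulrA mulrC.
rewrite -mulr_sumr => /eqP; rewrite mulf_eq0 (negbTE qc_neq0) /= => /eqP weights_eq0.
rewrite -[RHS]weights_eq0 big_mkcond.
by apply: eq_bigr => j _; case: (A j == c); rewrite ?mulr1 ?mulr0.
Qed.

Lemma Omega_power_sums_eq0 : Omega beta -> forall k, beta k != 0 -> A k = 0.
Proof.
move=> Omega_beta k beta_k; apply/eqP/contraT => Ak_neq0.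
pose C := [set j | (beta j != 0) && (A j == A k)].
have C_neq0 : C != set0 by apply/set0Pn; exists k; rewrite inE beta_k eqxx.
have C_supp : C \subset supp beta by apply/subsetP => j; rewrite !inE => /andP[].
have sumC_eq0 : \sum_(j in C) beta j = 0.
  rewrite -[RHS](level_set_weights_eq0 Ak_neq0) big_mkcond [RHS]big_mkcond.
  by apply: eq_bigr => j _; rewrite inE; case: eqVneq => [->|] /=; case: (A j == A k).
by have := Omega_beta C C_neq0 C_supp; rewrite sumC_eq0 eqxx.
Qed.

End PowerSums.

Section Weights.
Variables (K : fieldType) (n l : nat) (u : 'I_l -> 'I_n -> K).

Lemma colon_N_Balpha alpha g :
  colon (N_Balpha u alpha) g = N_Balpha u (alpha_fB u alpha g).
Proof.
apply: functional_extensionality => h; rewrite /colon /N_Balpha /alpha_fB.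
by congr (_ = 0); apply: eq_bigr => i _; rewrite mevalM mulrCA mulrC.
Qed.

Lemma N_Balpha_values beta h (y : 'I_l -> K) : (forall i, meval h (u i) = y i) ->
  N_Balpha u beta h = (\sum_i beta i * y i = 0).
Proof. by move=> hy; rewrite /N_Balpha; under eq_bigr do rewrite hy. Qed.

Lemma N_Balpha_subspace beta : is_Ksubspace (N_Balpha u beta).
Proof.
rewrite /N_Balpha; split=> [|x y Nx Ny|c x Nx].
- by rewrite big1 // => i _; rewrite meval0 mulr0.
- by under eq_bigr do rewrite mevalD mulrDr; rewrite big_split /= Nx Ny addr0.
- by under eq_bigr do rewrite mevalM mevalC mulrCA; rewrite -mulr_sumr Nx mulr0.
Qed.

Hypothesis u_inj : injective u.

Lemma meval_indicator i : exists e : mpoly K n, forall k, meval e (u k) = (k == i)%:R.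
Proof.
have : forall k, exists p : mpoly K n, meval p (u i) = 1 /\ (k != i -> meval p (u k) = 0).
  move=> k; have [_|neq_ki] := eqVneq k i; first by exists 1; rewrite meval1.
  have [p [p1 p0]] := meval_separates (fun E : u i = u k => elimN eqP neq_ki (u_inj (esym E))).
  by exists p.
case/fin_all_exists=> p hp; exists (\prod_k p k) => k; rewrite meval_prod.
have [->|neq_ki] := eqVneq k i; first by rewrite big1 // => j _; case: (hp j).
by rewrite (bigD1 k) //= (hp k).2 // mul0r.
Qed.

Lemma meval_interpolation (y : 'I_l -> K) : exists h : mpoly K n, forall i, meval h (u i) = y i.
Proof.
have /fin_all_exists [e he] := meval_indicator.
exists (\sum_j mconst n (y j) * e j) => i; rewrite meval_sum -[RHS](sum_mul_delta y i).
by apply: eq_bigr => j _; rewrite mevalM mevalC he eq_sym.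
Qed.

Lemma is_ideal_N_Balpha beta : is_ideal (N_Balpha u beta) <-> (#|supp beta| <= 1)%N.
Proof.
split=> [[_ _ N_mul]|supp_le1].
  apply/card_le1_eqP => i j; rewrite !inE => beta_i beta_j; apply/eqP/contraT => neq_ij.
  have [h hh] := meval_interpolation (fun k => beta j * (k == i)%:R - beta i * (k == j)%:R).
  have [r hr] := meval_interpolation (fun k => (k == i)%:R).
  have Nh : N_Balpha u beta h.
    rewrite (N_Balpha_values _ hh); under eq_bigr do rewrite mulrBr mulrCA [X in _ - X]mulrCA.
    by rewrite sumrB -!mulr_sumr !sum_mul_delta mulrC subrr.
  have rh k : meval (r * h) (u k) = beta j * (k == i)%:R.
    rewrite mevalM hr hh; have [->|neq_ki] := eqVneq k i; last by rewrite !mul0r mulr0.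
    by rewrite [i == j]eq_sym (negbTE neq_ij) !mul1r mulr0 subr0 mulr1.
  move: (N_mul r h Nh); rewrite (N_Balpha_values _ rh).
  under eq_bigr do rewrite mulrCA; rewrite -mulr_sumr sum_mul_delta.
  by move/eqP; rewrite mulf_eq0 (negbTE beta_i) (negbTE beta_j).
have sum_supp (y : 'I_l -> K) : \sum_k beta k * y k = \sum_(k in supp beta) beta k * y k.
  rewrite [RHS]big_mkcond; apply: eq_bigr => k _; rewrite inE.
  by case: eqVneq => [->|]; rewrite ?mul0r.
have [supp0|[i0 supp_i0]] := set_0Vmem (supp beta).
  by split=> *; rewrite /N_Balpha sum_supp supp0 big_set0.
have sum_single (y : 'I_l -> K) : \sum_k beta k * y k = beta i0 * y i0.
  by rewrite sum_supp (big_pred1 i0) //; apply: card_le1P.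
rewrite /N_Balpha; split=> [|x y|r x]; rewrite !sum_single.
- by rewrite meval0 mulr0.
- by rewrite mevalD mulrDr => -> ->; rewrite addr0.
- by rewrite mevalM mulrCA => ->; rewrite mulr0.
Qed.

Lemma is_Mathieu_N_Balpha beta : is_Mathieu (N_Balpha u beta) <-> Omega beta.
Proof.
split=> [[_ N_Mathieu] C C_neq0 C_supp|Omega_beta].
  apply/eqP => sumC_eq0; have [i0 C_i0] := set0Pn _ C_neq0.
  have [a ha] := meval_interpolation (fun k => (k \in C)%:R).
  have [b hb] := meval_interpolation (fun k => (k == i0)%:R).
  have Na m : (1 <= m)%N -> N_Balpha u beta (a ^+ m).
    move=> m_gt0; have am k : meval (a ^+ m) (u k) = (k \in C)%:R.
      by rewrite mevalX ha; case: (k \in C); rewrite ?expr1n // expr0n eqn0Ngt m_gt0.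
    rewrite (N_Balpha_values _ am) -[RHS]sumC_eq0 [RHS]big_mkcond.
    by apply: eq_bigr => k _; case: (k \in C); rewrite ?mulr1 ?mulr0.
  have [M hM] := N_Mathieu a Na b.
  have baM k : meval (b * a ^+ M) (u k) = (k == i0)%:R.
    rewrite mevalM mevalX hb ha; have [->|] := eqVneq k i0; last by rewrite mul0r.
    by rewrite C_i0 expr1n mulr1.
  move: (hM M (leqnn M)); rewrite (N_Balpha_values _ baM) sum_mul_delta => /eqP.
  by apply/negP; move: (subsetP C_supp i0 C_i0); rewrite inE.
split; first exact: N_Balpha_subspace.
move=> a Na b; exists 1%N => m m_gt0.
have power_sums_a j : (0 < j)%N -> \sum_k beta k * meval a (u k) ^+ j = 0.
  by move=> j_gt0; rewrite -(N_Balpha_values _ (fun k => mevalX a (u k) j)); apply: Na.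
have a_supp0 := Omega_power_sums_eq0 power_sums_a Omega_beta.
rewrite /N_Balpha big1 // => k _; have [->|beta_k] := eqVneq (beta k) 0; first by rewrite mul0r.
by rewrite mevalM mevalX a_supp0 // expr0n eqn0Ngt m_gt0 !mulr0.
Qed.

End Weights.

Theorem proposition6p3 (K : fieldType) (n l : nat) (hn : (1 <= n)%N) (hl : (1 <= l)%N)
  (u : 'I_l -> 'I_n -> K) (hu : injective u) (alpha : 'I_l -> K) :
  (forall f : mpoly K n,
     sigma_set (N_Balpha u alpha) f <-> (#|supp (alpha_fB u alpha f)| <= 1)%N) /\
  (forall f : mpoly K n,
     tau_set (N_Balpha u alpha) f <-> Omega (alpha_fB u alpha f)).
Proof.
split=> f; rewrite /sigma_set /tau_set colon_N_Balpha.
- exact: is_ideal_N_Balpha.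
- exact: is_Mathieu_N_Balpha.
Qed.
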